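(* Let $(G,\tau)$ be a Hausdorff topological group. (i) If $(G,\tau)$ is metrizable and compact, then $(G,\mathcal{S}_\tau)$ is $b$-bounded. (ii) If $(G,\tau)$ is countably infinite and metrizable, then $(G,\mathcal{S}_\tau)$ is not $b$-bounded.
   Context: $\mathcal{S}_\tau$ is the smallest group ideal on $G$ containing every set $\{x\}\cup\{x_n:n\in\omega\}$ with $x_n\to x$ in $(G,\tau)$. A group ideal on $G$ is a family of subsets containing all finite subsets, closed under subsets and under $(A,B)\mapsto AB^{-1}$; it defines the coarse structure on $G$ with base $\{\{(x,y):x\in Ay\}:A\in\mathcal{I}\}$, and the bounded subsets of $(G,\mathcal{I})$ are exactly the members of $\mathcal{I}$. A function $f:(X,\mathcal{E})\to\mathbb{R}$ is bornologous if $f(B)$ is bounded in $\mathbb{R}$ for every bounded subset $B$ of $X$. A coarse space is $b$-bounded if every bornologous function on it is bounded. *)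

From Stdlib Require Import Reals List.
Open Scope R_scope.

Section Defs.
Variable G : Type.

Definition is_group (mul : G -> G -> G) (inv : G -> G) (e : G) : Prop :=
  (forall x y z, mul x (mul y z) = mul (mul x y) z) /\
  (forall x, mul e x = x) /\ (forall x, mul x e = x) /\
  (forall x, mul (inv x) x = e) /\ (forall x, mul x (inv x) = e).

Definition is_topology (tau : (G -> Prop) -> Prop) : Prop :=
  tau (fun _ => True) /\
  (forall U V, tau U -> tau V -> tau (fun x => U x /\ V x)) /\
  (forall F : (G -> Prop) -> Prop, (forall U, F U -> tau U) ->
     tau (fun x => exists U, F U /\ U x)).

Definition is_topological_group (mul : G -> G -> G) (inv : G -> G) (e : G)
    (tau : (G -> Prop) -> Prop) : Prop :=
  is_group mul inv e /\ is_topology tau /\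
  (forall U x y, tau U -> U (mul x y) ->
     exists V W, tau V /\ tau W /\ V x /\ W y /\
       (forall v w, V v -> W w -> U (mul v w))) /\
  (forall U, tau U -> tau (fun x => U (inv x))).

Definition is_hausdorff (tau : (G -> Prop) -> Prop) : Prop :=
  forall x y, x <> y -> exists U V, tau U /\ tau V /\ U x /\ V y /\
    (forall z, U z -> V z -> False).

Definition is_metric (d : G -> G -> R) : Prop :=
  (forall x y, 0 <= d x y) /\ (forall x y, d x y = 0 <-> x = y) /\
  (forall x y, d x y = d y x) /\ (forall x y z, d x z <= d x y + d y z).

Definition is_metrizable (tau : (G -> Prop) -> Prop) : Prop :=
  exists d, is_metric d /\
    forall U, tau U <-> (forall x, U x -> exists eps, 0 < eps /\
                           forall y, d x y < eps -> U y).

Definition is_compact (tau : (G -> Prop) -> Prop) : Prop :=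
  forall (I : Type) (U : I -> G -> Prop), (forall i, tau (U i)) ->
    (forall x, exists i, U i x) ->
    exists l : list I, forall x, exists i, In i l /\ U i x.

Definition countably_infinite : Prop :=
  exists f : nat -> G, (forall n m, f n = f m -> n = m) /\ (forall x, exists n, f n = x).

Definition converges (tau : (G -> Prop) -> Prop) (s : nat -> G) (x : G) : Prop :=
  forall U, tau U -> U x -> exists N, forall n, (N <= n)%nat -> U (s n).

Definition finite_set (A : G -> Prop) : Prop :=
  exists l : list G, forall x, A x -> In x l.

Definition set_mul_inv (mul : G -> G -> G) (inv : G -> G) (A B : G -> Prop) : G -> Prop :=
  fun z => exists a b, A a /\ B b /\ z = mul a (inv b).

Definition group_ideal (mul : G -> G -> G) (inv : G -> G)
    (I : (G -> Prop) -> Prop) : Prop :=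
  (forall A, finite_set A -> I A) /\
  (forall A B, I A -> (forall x, B x -> A x) -> I B) /\
  (forall A B, I A -> I B -> I (set_mul_inv mul inv A B)).

Definition S_tau (mul : G -> G -> G) (inv : G -> G) (tau : (G -> Prop) -> Prop)
    (A : G -> Prop) : Prop :=
  forall I, group_ideal mul inv I ->
    (forall (s : nat -> G) x, converges tau s x ->
        I (fun y => y = x \/ exists n, y = s n)) ->
    I A.

(* For the coarse space (G, I) given by a group ideal I, the bounded subsets
   are exactly the members of I. *)
Definition bornologous (I : (G -> Prop) -> Prop) (f : G -> R) : Prop :=
  forall B, I B -> exists M, forall x, B x -> Rabs (f x) <= M.

Definition b_bounded (I : (G -> Prop) -> Prop) : Prop :=
  forall f : G -> R, bornologous I f -> exists M, forall x, Rabs (f x) <= M.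

End Defs.

Arguments is_group {G}. Arguments is_topology {G}. Arguments is_topological_group {G}.
Arguments is_hausdorff {G}. Arguments is_metric {G}. Arguments is_metrizable {G}.
Arguments is_compact {G}. Arguments converges {G}. Arguments finite_set {G}.
Arguments set_mul_inv {G}. Arguments group_ideal {G}. Arguments S_tau {G}.
Arguments bornologous {G}. Arguments b_bounded {G}.

From Stdlib Require Import Reals List.
From Stdlib Require Import Lra Lia Classical ClassicalEpsilon FunctionalExtensionality.
Open Scope R_scope.

(* Call a sequence [y] sub-convergent if some [y o m] with [m n >= n] converges,
   and a set sequentially precompact if every sequence in it is sub-convergent.

   (i) In a compact metric space every sequence has a cluster point, hence is
   sub-convergent.  If [f] is bornologous for [S_tau] but unbounded, pick [y n]
   with [|f (y n)| > n]; a convergent subsequence together with its limit is a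
   generator of [S_tau], on which [f] would have to be bounded.

   (ii) Sequentially precompact sets form a group ideal (multiplication and
   inversion are continuous) containing every convergent sequence, so every
   member of [S_tau] is sequentially precompact.  Given an injective sequence
   [c] with no sub-convergent subsequence, the function [c k |-> k] (and [0]
   off the range of [c]) is then bornologous and unbounded.  In a countably
   infinite metrizable group such a [c] exists: either all points are isolated
   (by homogeneity, as soon as one is) and an enumeration works, or no point is
   isolated and a sequence of nested balls, the [n]-th avoiding the [n]-th
   point of the group, stays eventually far from every point. *)

(* [y] has a convergent "subsequence" [y o m], where [m] only needs [m n >= n]. *)
Definition sub_convergent {G : Type} (tau : (G -> Prop) -> Prop) (y : nat -> G) : Prop :=
  exists (m : nat -> nat) (z : G),
    (forall n, (n <= m n)%nat) /\ converges tau (fun n => y (m n)) z.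

Definition seq_precompact {G : Type} (tau : (G -> Prop) -> Prop) (A : G -> Prop) : Prop :=
  forall y : nat -> G, (forall k, A (y k)) -> sub_convergent tau y.

Lemma converges_reindex {G : Type} (tau : (G -> Prop) -> Prop) s z (m : nat -> nat) :
  converges tau s z -> (forall n, (n <= m n)%nat) -> converges tau (fun n => s (m n)) z.
Proof.
  intros Hc Hm U HU Hz. destruct (Hc U HU Hz) as [N HN].
  exists N. intros n Hn. apply HN. specialize (Hm n). lia.
Qed.

Lemma sub_convergent_reindex {G : Type} (tau : (G -> Prop) -> Prop) (y : nat -> G)
    (m : nat -> nat) :
  (forall n, (n <= m n)%nat) -> sub_convergent tau (fun n => y (m n)) -> sub_convergent tau y.
Proof.
  intros Hm [m' [z [Hm' Hc]]]. exists (fun n => m (m' n)), z. split; [|exact Hc].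
  intro n. specialize (Hm (m' n)). specialize (Hm' n). lia.
Qed.

Lemma frequent_value_sub_convergent {G : Type} (tau : (G -> Prop) -> Prop) (y : nat -> G) a :
  (forall N, exists k, (N <= k)%nat /\ y k = a) -> sub_convergent tau y.
Proof.
  intro Ha. destruct (choice _ Ha) as [m Hm]. exists m, a. split; [intro n; apply Hm|].
  intros U _ Ua. exists 0%nat. intros n _. destruct (Hm n) as [_ ->]. exact Ua.
Qed.

Lemma eventually_in_list_frequent {G : Type} (l : list G) (y : nat -> G) :
  (exists N, forall k, (N <= k)%nat -> In (y k) l) ->
  exists a, forall N, exists k, (N <= k)%nat /\ y k = a.
Proof.
  induction l as [|a l IH]; intros [N HN].
  - destruct (HN N (le_n N)).
  - destruct (classic (forall M, exists k, (M <= k)%nat /\ y k = a)) as [Ha|Ha].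
    + exists a. exact Ha.
    + apply not_all_ex_not in Ha as [M HM]. apply IH. exists (Nat.max N M).
      intros k Hk. destruct (HN k ltac:(lia)) as [E|E]; [|exact E].
      exfalso. apply HM. exists k. split; [lia | now symmetry].
Qed.

Lemma eventually_in_list_sub_convergent {G : Type} (tau : (G -> Prop) -> Prop)
    (l : list G) (y : nat -> G) :
  (exists N, forall k, (N <= k)%nat -> In (y k) l) -> sub_convergent tau y.
Proof.
  intro Hl. destruct (eventually_in_list_frequent l y Hl) as [a Ha].
  exact (frequent_value_sub_convergent tau y a Ha).
Qed.

Lemma unbounded_witnesses {G : Type} (A : G -> Prop) (f : G -> R) :
  ~ (exists M, forall x, A x -> Rabs (f x) <= M) ->
  exists y : nat -> G, forall n, A (y n) /\ INR n < Rabs (f (y n)).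
Proof.
  intro Hnb. apply (choice (fun n x => A x /\ INR n < Rabs (f x))). intro n. apply NNPP. intro Hn. apply Hnb.
  exists (INR n). intros x Ax. apply Rnot_lt_le. intro Hlt. apply Hn. exists x. auto.
Qed.

Lemma inv_succ_eventually_small (eps : R) :
  0 < eps -> exists N, forall k, (N <= k)%nat -> / INR (S k) < eps.
Proof.
  intro Heps. destruct (archimed_cor1 eps Heps) as [N [HN HN0]]. exists N. intros k Hk.
  apply Rle_lt_trans with (/ INR N); [|exact HN].
  apply Rinv_le_contravar; [apply lt_0_INR; exact HN0 | apply le_INR; lia].
Qed.

(** * Part (i): sequential compactness gives b-boundedness *)

Lemma S_tau_convergent_set {G : Type} mul inv (tau : (G -> Prop) -> Prop) s x :
  converges tau s x -> S_tau mul inv tau (fun y => y = x \/ exists n, y = s n).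
Proof. intros Hc I _ Hgen. exact (Hgen s x Hc). Qed.

Lemma sub_convergent_b_bounded {G : Type} mul inv (tau : (G -> Prop) -> Prop) :
  (forall y : nat -> G, sub_convergent tau y) -> b_bounded (S_tau mul inv tau).
Proof.
  intros Hseq f Hf. apply NNPP. intro Hnb.
  destruct (unbounded_witnesses (fun _ => True) f ltac:(firstorder)) as [y Hy].
  destruct (Hseq y) as [m [z [Hm Hc]]].
  destruct (Hf _ (S_tau_convergent_set mul inv tau _ _ Hc)) as [M HM].
  destruct (INR_unbounded M) as [n Hn].
  assert (Hbound : Rabs (f (y (m n))) <= M) by (apply HM; right; exists n; reflexivity).
  assert (Hgrow : INR (m n) < Rabs (f (y (m n)))) by apply Hy.
  assert (INR n <= INR (m n)) by (apply le_INR, Hm).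
  lra.
Qed.

(** * Metric spaces *)

Section MetricSpace.
Variable G : Type.
Variable tau : (G -> Prop) -> Prop.
Variable d : G -> G -> R.
Hypothesis d_metric : is_metric d.
Hypothesis tau_metric : forall U, tau U <-> (forall x, U x -> exists eps, 0 < eps /\
                                              forall y, d x y < eps -> U y).

Lemma dist_self x : d x x = 0.
Proof. apply (proj1 (proj2 d_metric)). reflexivity. Qed.

Lemma dist_sym x y : d x y = d y x.
Proof. apply (proj1 (proj2 (proj2 d_metric))). Qed.

Lemma dist_triangle x y z : d x z <= d x y + d y z.
Proof. apply (proj2 (proj2 (proj2 d_metric))). Qed.

Lemma dist_pos x y : x <> y -> 0 < d x y.
Proof.
  intro Hxy. destruct (proj1 d_metric x y) as [H|H]; [exact H|].
  exfalso. apply Hxy, (proj1 (proj2 d_metric)). auto.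
Qed.

Lemma ball_open z r : tau (fun y => d z y < r).
Proof.
  apply tau_metric. intros x Hx. exists (r - d z x). split; [lra|].
  intros y Hy. pose proof (dist_triangle z x y). lra.
Qed.

Lemma converges_dist s z :
  converges tau s z -> forall eps, 0 < eps -> exists N, forall n, (N <= n)%nat -> d z (s n) < eps.
Proof.
  intros Hc eps Heps. apply (Hc (fun y => d z y < eps)); [apply ball_open|].
  rewrite dist_self. exact Heps.
Qed.

Lemma dist_converges s z :
  (forall eps, 0 < eps -> exists N, forall n, (N <= n)%nat -> d z (s n) < eps) ->
  converges tau s z.
Proof.
  intros H U HU Hz. destruct (proj1 (tau_metric U) HU z Hz) as [eps [Heps Hball]].
  destruct (H eps Heps) as [N HN]. exists N. intros n Hn. apply Hball, HN, Hn.
Qed.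

(* In a compact metric space every sequence has a cluster point: otherwise the
   balls around each point that the sequence eventually leaves form an open cover
   without finite subcover. *)
Lemma compact_cluster_point :
  is_compact tau -> forall x : nat -> G,
  exists z, forall eps, 0 < eps -> forall N, exists n, (N <= n)%nat /\ d z (x n) < eps.
Proof.
  intros Hcomp x. apply NNPP. intro Hno.
  assert (Hleave : forall z, exists p : R * nat,
             0 < fst p /\ forall n, (snd p <= n)%nat -> fst p <= d z (x n)).
  { intro z. apply NNPP. intro Hn. apply Hno. exists z. intros eps Heps N. apply NNPP.
    intro Hn2. apply Hn. exists (eps, N). split; [exact Heps|]. intros n Hn3.
    apply Rnot_lt_le. intro Hlt. apply Hn2. exists n. auto. }
  set (I := {q : G * (R * nat) | 0 < fst (snd q) /\
              forall n, (snd (snd q) <= n)%nat -> fst (snd q) <= d (fst q) (x n)}).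
  set (U := fun (i : I) y => d (fst (proj1_sig i)) y < fst (snd (proj1_sig i))).
  destruct (Hcomp I U) as [l Hl].
  - intro i. apply ball_open.
  - intro y. destruct (Hleave y) as [p Hp]. exists (exist _ (y, p) Hp).
    unfold U; simpl. rewrite dist_self. apply Hp.
  - assert (Hmax : exists N, forall i, In i l -> (snd (snd (proj1_sig i)) <= N)%nat).
    { clear Hl. induction l as [|a l [N HN]].
      - exists 0%nat. intros i [].
      - exists (Nat.max N (snd (snd (proj1_sig a)))). intros i [<-|Hi]; [lia|].
        specialize (HN i Hi). lia. }
    destruct Hmax as [N HN]. destruct (Hl (x N)) as [i [Hi HU]].
    pose proof (proj2 (proj2_sig i) N (HN i Hi)). unfold U in HU. lra.
Qed.

(* A cluster point is the limit of a subsequence: take [m k >= k] within [1/(k+1)]. *)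
Lemma cluster_point_sub_convergent (x : nat -> G) z :
  (forall eps, 0 < eps -> forall N, exists n, (N <= n)%nat /\ d z (x n) < eps) ->
  sub_convergent tau x.
Proof.
  intro Hz.
  destruct (choice (fun k n => (k <= n)%nat /\ d z (x n) < / INR (S k))) as [m Hm].
  { intro k. apply Hz, Rinv_0_lt_compat, lt_0_INR. lia. }
  exists m, z. split; [intro n; apply Hm|].
  apply dist_converges. intros eps Heps.
  destruct (inv_succ_eventually_small eps Heps) as [N HN]. exists N. intros k Hk.
  apply Rlt_trans with (/ INR (S k)); [apply Hm | exact (HN k Hk)].
Qed.

Lemma compact_sub_convergent : is_compact tau -> forall x : nat -> G, sub_convergent tau x.
Proof.
  intros Hcomp x. destruct (compact_cluster_point Hcomp x) as [z Hz].
  exact (cluster_point_sub_convergent x z Hz).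
Qed.

Definition eventually_far (c : nat -> G) : Prop :=
  forall z, exists delta N, 0 < delta /\ forall n, (N <= n)%nat -> delta <= d z (c n).

Lemma eventually_far_not_sub_convergent c : eventually_far c -> ~ sub_convergent tau c.
Proof.
  intros Hfar [m [z [Hm Hc]]]. destruct (Hfar z) as [delta [N [Hdelta HN]]].
  destruct (converges_dist _ _ Hc delta Hdelta) as [N' HN'].
  specialize (HN' (N + N')%nat ltac:(lia)). specialize (Hm (N + N')%nat).
  specialize (HN (m (N + N')%nat) ltac:(lia)). lra.
Qed.

Lemma eventually_far_reindex c (m : nat -> nat) :
  eventually_far c -> (forall n, (n <= m n)%nat) -> eventually_far (fun n => c (m n)).
Proof.
  intros Hfar Hm z. destruct (Hfar z) as [delta [N [Hdelta HN]]].
  exists delta, N. split; [exact Hdelta|]. intros n Hn. apply HN. specialize (Hm n). lia.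
Qed.

(* Without isolated points, every ball contains a smaller closed ball that
   misses both its center and a prescribed point [p]. *)
Lemma shrink_ball_avoiding :
  (forall g eps, 0 < eps -> exists y, y <> g /\ d g y < eps) ->
  forall c r p, 0 < r -> exists c' r',
    0 < r' /\ d c c' + r' <= r /\ r' < d c c' /\ r' < d p c'.
Proof.
  intros Hdense c r p Hr.
  assert (Hy : exists y, y <> c /\ y <> p /\ d c y < r).
  { destruct (classic (c = p)) as [<-|Hcp].
    - destruct (Hdense c r Hr) as [y [Hyc Hy]]. exists y. auto.
    - destruct (Hdense c (Rmin r (d c p))) as [y [Hyc Hy]].
      + apply Rmin_pos; [exact Hr | apply dist_pos, Hcp].
      + pose proof (Rmin_l r (d c p)). pose proof (Rmin_r r (d c p)).
        exists y. repeat split; [exact Hyc | intros -> | ]; lra. }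
  destruct Hy as [y [Hyc [Hyp Hy]]].
  pose proof (dist_pos c y (not_eq_sym Hyc)). pose proof (dist_pos p y (not_eq_sym Hyp)).
  set (r' := Rmin (r - d c y) (Rmin (d c y / 2) (d p y / 2))).
  pose proof (Rmin_l (r - d c y) (Rmin (d c y / 2) (d p y / 2))).
  pose proof (Rmin_r (r - d c y) (Rmin (d c y / 2) (d p y / 2))).
  pose proof (Rmin_l (d c y / 2) (d p y / 2)). pose proof (Rmin_r (d c y / 2) (d p y / 2)).
  assert (0 < r') by (repeat apply Rmin_pos; lra).
  exists y, r'. fold r' in H1, H2. repeat split; lra.
Qed.

(* Without isolated points, nested closed balls [B(c_n, r_n)], the [(n+1)]-th
   avoiding [h n] and [c_n], yield an injective sequence eventually far from
   every point [h n]. *)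
Lemma nested_balls_sequence (h : nat -> G) :
  (forall z, exists j, h j = z) ->
  (forall g eps, 0 < eps -> exists y, y <> g /\ d g y < eps) ->
  exists c : nat -> G, (forall i j, c i = c j -> i = j) /\ eventually_far c.
Proof.
  intros Hsurj Hdense.
  destruct (choice (fun (q : nat * (G * R)) (q' : G * R) =>
      0 < snd (snd q) -> 0 < snd q' /\ d (fst (snd q)) (fst q') + snd q' <= snd (snd q) /\
      snd q' < d (fst (snd q)) (fst q') /\ snd q' < d (h (fst q)) (fst q'))) as [F HF].
  { intros [n [c r]]. destruct (Rlt_or_le 0 r) as [Hr|Hr].
    - destruct (shrink_ball_avoiding Hdense c r (h n) Hr) as [c' [r' Hc']].
      exists (c', r'). intros _. exact Hc'.
    - exists (c, r). simpl. lra. }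
  set (ball := nat_rect (fun _ => (G * R)%type) (h 0%nat, 1) (fun n q => F (n, q))).
  assert (Hpos : forall n, 0 < snd (ball n)).
  { induction n as [|n IH]; [simpl; lra | exact (proj1 (HF (n, ball n) IH))]. }
  assert (Hstep : forall n,
      d (fst (ball n)) (fst (ball (S n))) + snd (ball (S n)) <= snd (ball n) /\
      snd (ball (S n)) < d (fst (ball n)) (fst (ball (S n))) /\
      snd (ball (S n)) < d (h n) (fst (ball (S n)))).
  { intro n. exact (proj2 (HF (n, ball n) (Hpos n))). }
  (* Closed balls are nested. *)
  assert (Hnest : forall a k,
      d (fst (ball a)) (fst (ball (k + a)%nat)) + snd (ball (k + a)%nat) <= snd (ball a)).
  { intros a k. induction k as [|k IH].
    - change (0 + a)%nat with a. rewrite dist_self. lra.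
    - change (S k + a)%nat with (S (k + a)). destruct (Hstep (k + a)%nat) as [Hs _].
      pose proof (dist_triangle (fst (ball a)) (fst (ball (k + a)%nat))
                                (fst (ball (S (k + a))))).
      lra. }
  assert (Hinside : forall a b, (a <= b)%nat -> d (fst (ball a)) (fst (ball b)) <= snd (ball a)).
  { intros a b Hab. pose proof (Hnest a (b - a)%nat) as H.
    replace (b - a + a)%nat with b in H by lia. pose proof (Hpos b). lra. }
  assert (Hdistinct : forall i j, (i < j)%nat -> fst (ball i) <> fst (ball j)).
  { intros i j Hij E. pose proof (Hinside (S i) j Hij) as H. rewrite <- E, dist_sym in H.
    pose proof (proj1 (proj2 (Hstep i))). lra. }
  exists (fun n => fst (ball n)). split.
  - intros i j E. destruct (Nat.lt_total i j) as [H|[H|H]]; [| exact H |]; exfalso.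
    + exact (Hdistinct i j H E).
    + exact (Hdistinct j i H (eq_sym E)).
  - intro z. destruct (Hsurj z) as [j <-].
    pose proof (proj2 (proj2 (Hstep j))).
    exists (d (h j) (fst (ball (S j))) - snd (ball (S j))), (S j). split; [lra|].
    intros n Hn. pose proof (Hinside (S j) n Hn).
    pose proof (dist_triangle (h j) (fst (ball n)) (fst (ball (S j)))).
    rewrite (dist_sym (fst (ball n))) in *. lra.
Qed.

End MetricSpace.

Arguments eventually_far {G}.

(** * Part (ii): members of [S_tau] are sequentially precompact *)

Lemma converges_mul {G : Type} (tau : (G -> Prop) -> Prop) (mul : G -> G -> G) a b x y :
  (forall U x y, tau U -> U (mul x y) ->
     exists V W, tau V /\ tau W /\ V x /\ W y /\ (forall v w, V v -> W w -> U (mul v w))) ->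
  converges tau a x -> converges tau b y -> converges tau (fun n => mul (a n) (b n)) (mul x y).
Proof.
  intros Hmul Ha Hb U HU Hxy. destruct (Hmul U x y HU Hxy) as [V [W [HV [HW [Vx [Wy Hvw]]]]]].
  destruct (Ha V HV Vx) as [N1 H1]. destruct (Hb W HW Wy) as [N2 H2].
  exists (Nat.max N1 N2). intros n Hn. apply Hvw; [apply H1 | apply H2]; lia.
Qed.

Lemma converges_inv {G : Type} (tau : (G -> Prop) -> Prop) (inv : G -> G) s z :
  (forall U, tau U -> tau (fun x => U (inv x))) ->
  converges tau s z -> converges tau (fun n => inv (s n)) (inv z).
Proof. intros Hinv Hc U HU Hz. exact (Hc (fun x => U (inv x)) (Hinv U HU) Hz). Qed.

Lemma seq_precompact_finite {G : Type} (tau : (G -> Prop) -> Prop) A :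
  finite_set A -> seq_precompact tau A.
Proof.
  intros [l Hl] y Hy. apply (eventually_in_list_sub_convergent tau l).
  exists 0%nat. intros k _. apply Hl, Hy.
Qed.

(* Extract a convergent subsequence of the first factors, then of the second ones. *)
Lemma seq_precompact_mul_inv {G : Type} mul inv (e : G) tau :
  is_topological_group mul inv e tau ->
  forall A B, seq_precompact tau A -> seq_precompact tau B ->
  seq_precompact tau (set_mul_inv mul inv A B).
Proof.
  intros [_ [_ [Hmul Hinv]]] A B HA HB y Hy.
  destruct (choice (fun k (p : G * G) => A (fst p) /\ B (snd p) /\
                      y k = mul (fst p) (inv (snd p)))) as [p Hp].
  { intro k. destruct (Hy k) as [a [b Hab]]. exists (a, b). exact Hab. }
  destruct (HA (fun k => fst (p k)) (fun k => proj1 (Hp k))) as [m1 [z1 [Hm1 Hc1]]].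
  apply (sub_convergent_reindex tau y m1 Hm1).
  destruct (HB (fun n => snd (p (m1 n))) (fun n => proj1 (proj2 (Hp (m1 n)))))
    as [m2 [z2 [Hm2 Hc2]]].
  exists m2, (mul z1 (inv z2)). split; [exact Hm2|].
  assert (Heq : (fun n => y (m1 (m2 n))) =
                (fun n => mul (fst (p (m1 (m2 n)))) (inv (snd (p (m1 (m2 n))))))).
  { extensionality n. apply Hp. }
  rewrite Heq. apply (converges_mul tau mul); [exact Hmul | | exact (converges_inv tau inv _ _ Hinv Hc2)].
  exact (converges_reindex tau (fun n => fst (p (m1 n))) z1 m2 Hc1 Hm2).
Qed.

(* A sequence in [{x} u {s n}] either meets arbitrarily late terms of [s]
   infinitely often (and then has a subsequence tending to [x]) or eventually
   stays in a finite set. *)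
Lemma seq_precompact_convergent_set {G : Type} (tau : (G -> Prop) -> Prop) s x :
  converges tau s x -> seq_precompact tau (fun y => y = x \/ exists n, y = s n).
Proof.
  intros Hc y Hy.
  destruct (classic (forall N, exists k, (N <= k)%nat /\ exists j, (N <= j)%nat /\ y k = s j))
    as [Hlate|Hlate].
  - destruct (choice _ Hlate) as [m Hm]. exists m, x. split; [intro n; apply Hm|].
    intros U HU Hx. destruct (Hc U HU Hx) as [N HN]. exists N. intros n Hn.
    destruct (Hm n) as [_ [j [Hj ->]]]. apply HN. lia.
  - apply not_all_ex_not in Hlate as [N HN].
    apply (eventually_in_list_sub_convergent tau (x :: map s (seq 0 N))).
    exists N. intros k Hk. destruct (Hy k) as [E|[j E]]; [left; auto|].
    right. apply in_map_iff. exists j. split; [auto|]. apply in_seq.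
    destruct (Nat.lt_ge_cases j N) as [Hj|Hj]; [lia|].
    exfalso. apply HN. exists k. split; [exact Hk|]. exists j. auto.
Qed.

(* Sequentially precompact sets form a group ideal containing the generators
   of [S_tau], hence containing [S_tau]. *)
Lemma S_tau_seq_precompact {G : Type} mul inv (e : G) tau :
  is_topological_group mul inv e tau ->
  forall A, S_tau mul inv tau A -> seq_precompact tau A.
Proof.
  intros Htg A HA. apply HA.
  - split; [|split].
    + apply seq_precompact_finite.
    + intros A' B HA' Hsub y Hy. apply HA'. intro k. apply Hsub, Hy.
    + exact (seq_precompact_mul_inv mul inv e tau Htg).
  - apply seq_precompact_convergent_set.
Qed.

Lemma index_function {G : Type} (c : nat -> G) :
  (forall i j, c i = c j -> i = j) ->
  exists f : G -> R, (forall k, f (c k) = INR k) /\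
                     (forall g, f g = 0 \/ exists k, c k = g /\ f g = INR k).
Proof.
  intro Hinj.
  destruct (choice (fun g r => (exists k, c k = g /\ r = INR k) \/
                               (~ (exists k, c k = g) /\ r = 0))) as [f Hf].
  { intro g. destruct (classic (exists k, c k = g)) as [[k Hk]|Hno].
    - exists (INR k). left. exists k. auto.
    - exists 0. right. auto. }
  exists f. split.
  - intro k. destruct (Hf (c k)) as [[k' [Hk' ->]]|[Hno _]].
    + rewrite (Hinj k' k Hk'). reflexivity.
    + exfalso. apply Hno. exists k. reflexivity.
  - intro g. destruct (Hf g) as [[k [Hk ->]]|[_ ->]]; [right; exists k; auto | left; auto].
Qed.

(* If no reindexing [c o m] ([m n >= n]) of an injective sequence [c] is
   sub-convergent, its index function is bornologous for [S_tau] (members of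
   [S_tau] are sequentially precompact) but unbounded. *)
Lemma nowhere_convergent_not_b_bounded {G : Type} mul inv (e : G) tau (c : nat -> G) :
  is_topological_group mul inv e tau ->
  (forall i j, c i = c j -> i = j) ->
  (forall m : nat -> nat, (forall n, (n <= m n)%nat) -> ~ sub_convergent tau (fun n => c (m n))) ->
  ~ b_bounded (S_tau mul inv tau).
Proof.
  intros Htg Hinj Hnc Hb. destruct (index_function c Hinj) as [f [Hfc Hf]].
  assert (Hborn : bornologous (S_tau mul inv tau) f).
  { intros B HB. apply NNPP. intro Hnb.
    destruct (unbounded_witnesses B f Hnb) as [a Ha].
    (* Each [a n] is some [c k] with [k > n]. *)
    destruct (choice (fun n k => c k = a n /\ (n < k)%nat)) as [k Hk].
    { intro n. destruct (Ha n) as [_ Hl]. destruct (Hf (a n)) as [E|[k [Ek E]]].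
      - rewrite E, Rabs_R0 in Hl. pose proof (pos_INR n). lra.
      - exists k. split; [exact Ek|]. rewrite E, Rabs_pos_eq in Hl by apply pos_INR.
        apply INR_lt, Hl. }
    apply (Hnc k (fun n => Nat.lt_le_incl _ _ (proj2 (Hk n)))).
    assert (Heq : (fun n => c (k n)) = a) by (extensionality n; apply Hk).
    rewrite Heq. exact (S_tau_seq_precompact mul inv e tau Htg B HB a (fun n => proj1 (Ha n))). }
  destruct (Hb f Hborn) as [M HM]. destruct (INR_unbounded M) as [k Hk].
  specialize (HM (c k)). rewrite Hfc, Rabs_pos_eq in HM by apply pos_INR. lra.
Qed.

(** * Part (ii): a bad sequence in a countably infinite metrizable group *)

(* Translations are homeomorphisms: if one point is isolated, all are. *)
Lemma isolated_everywhere {G : Type} mul inv (e : G) tau d :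
  is_topological_group mul inv e tau -> is_metric d ->
  (forall U, tau U <-> (forall x, U x -> exists eps, 0 < eps /\ forall y, d x y < eps -> U y)) ->
  forall g0 eps0, 0 < eps0 -> (forall y, d g0 y < eps0 -> y = g0) ->
  forall g, exists eps, 0 < eps /\ forall y, d g y < eps -> y = g.
Proof.
  intros [[Hassoc [Hel [Her [Hil _]]]] [_ [Hmul _]]] Hd Htau g0 eps0 Heps0 Hg0 g.
  set (a := mul g0 (inv g)).
  assert (Hag : mul a g = g0) by (unfold a; rewrite <- Hassoc, Hil, Her; reflexivity).
  assert (Hcancel : forall y, mul (inv a) (mul a y) = y) by (intro y; rewrite Hassoc, Hil, Hel; reflexivity).
  destruct (Hmul (fun y => d g0 y < eps0) a g) as [V [W [_ [HW [Va [Wg Hvw]]]]]].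
  - apply (ball_open G tau d Hd Htau).
  - rewrite Hag, (dist_self G d Hd). exact Heps0.
  - destruct (proj1 (Htau W) HW g Wg) as [eps [Heps Hball]]. exists eps. split; [exact Heps|].
    intros y Hy. pose proof (Hg0 _ (Hvw a y Va (Hball y Hy))) as E.
    rewrite <- (Hcancel y), E, <- Hag. apply Hcancel.
Qed.

Lemma countable_metrizable_eventually_far_seq {G : Type} mul inv (e : G) tau d :
  is_topological_group mul inv e tau -> countably_infinite G -> is_metric d ->
  (forall U, tau U <-> (forall x, U x -> exists eps, 0 < eps /\ forall y, d x y < eps -> U y)) ->
  exists c : nat -> G, (forall i j, c i = c j -> i = j) /\ eventually_far d c.
Proof.
  intros Htg [h [Hinj Hsurj]] Hd Htau.
  destruct (classic (forall g eps, 0 < eps -> exists y, y <> g /\ d g y < eps)) as [Hdense|Hiso].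
  - exact (nested_balls_sequence G d Hd h Hsurj Hdense).
  - (* Some point is isolated, hence all are, and the enumeration [h] works. *)
    assert (Hg0 : exists g0 eps0, 0 < eps0 /\ forall y, d g0 y < eps0 -> y = g0).
    { apply NNPP. intro Hn. apply Hiso. intros g eps Heps. apply NNPP. intro Hn2. apply Hn.
      exists g, eps. split; [exact Heps|]. intros y Hy. apply NNPP. intro Hyg.
      apply Hn2. exists y. auto. }
    destruct Hg0 as [g0 [eps0 [Heps0 Hg0]]].
    exists h. split; [exact Hinj|]. intro z.
    destruct (isolated_everywhere mul inv e tau d Htg Hd Htau g0 eps0 Heps0 Hg0 z)
      as [eps [Heps Hz]].
    destruct (Hsurj z) as [j Hj]. exists eps, (S j). split; [exact Heps|].
    intros n Hn. apply Rnot_lt_le. intro Hlt. apply Hz in Hlt.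
    rewrite <- Hj in Hlt. apply Hinj in Hlt. lia.
Qed.

Theorem theorem9 (G : Type) (mul : G -> G -> G) (inv : G -> G) (e : G)
    (tau : (G -> Prop) -> Prop) :
  is_topological_group mul inv e tau -> is_hausdorff tau ->
  (is_metrizable tau -> is_compact tau -> b_bounded (S_tau mul inv tau)) /\
  (countably_infinite G -> is_metrizable tau -> ~ b_bounded (S_tau mul inv tau)).
Proof.
  intros Htg _. split.
  - intros [d [Hd Htau]] Hcomp.
    apply sub_convergent_b_bounded. exact (compact_sub_convergent G tau d Hd Htau Hcomp).
  - intros Hcount [d [Hd Htau]].
    destruct (countable_metrizable_eventually_far_seq mul inv e tau d Htg Hcount Hd Htau)
      as [c [Hinj Hfar]].
    apply (nowhere_convergent_not_b_bounded mul inv e tau c Htg Hinj).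
    intros m Hm. apply (eventually_far_not_sub_convergent G tau d Hd Htau).
    exact (eventually_far_reindex G d c m Hfar Hm).
Qed.
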